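(* Let $\mathcal{D}$ be a liability category and let $\mathcal{L}$ be the liability sheaf on $\mathcal{H}_G$ of a liability network $N=(G,X,\lambda,\iota;\delta,\hat\alpha)$ in $\mathcal{D}$, where $G=(V,E,s,t)$ is acyclic, and let $r$ be the maximum length (in edges) of a directed path in $G$. Then $\Phi_*^{r+1}$ is constant on $\mathcal{G}_P=\mathrm{Hom}(1,P)$, with image a single global element $\mathbf{x}^*\in\mathrm{Fix}(\Phi_* )$; equivalently, $\mathcal{H}_G$ admits a unique clearing section (i.e. $\Gamma(\mathcal{H}_G;\mathcal{L})$ has exactly one element), computed by $r+1$ applications of $\Phi_*$ to any starting point.
   Context: A liability category is a category $\mathcal{D}$ with terminal object $1$, finite products and equalizers, a partial order on each $\mathrm{Hom}(1,P)$ preserved by postcomposition, a pullback-stable class $\mathcal{S}_P$ of constraint monomorphisms into each $P$, bound selectors $\beta_P:\mathrm{Hom}(1,P)\to\mathcal{S}_P$, and order isomorphisms $\mathrm{Hom}(1,\prod_iP_i)\cong\prod_i\mathrm{Hom}(1,P_i)$ (componentwise order) for finite families. A liability network in $\mathcal{D}$: finite directed graph $G=(V,E,s,t)$, payment objects $X_v$, liabilities $\lambda_e:1\to X_{s(e)}$, exogenous resources $\iota_v:1\to X_v$, distributors $\delta_e:X_{s(e)}\to X_{s(e)}^{\lambda_e}$ where $X_{s(e)}^{\lambda_e}$ is the domain of $\beta_{X_{s(e)}}(\lambda_e)$, aggregators $\hat\alpha_v:X_v\times\prod_{t(e)=v}X_{s(e)}^{\lambda_e}\to X_v$, and partial aggregators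 $\alpha_v=\hat\alpha_v\circ(\iota_v\times\mathrm{id}):\prod_{t(e)=v}X_{s(e)}^{\lambda_e}\to X_v$, an empty product being $1$. With $P=\prod_vX_v$, $B=\prod_eX_{s(e)}^{\lambda_e}$, $D:P\to B$ with components $\delta_e\circ\pi_{s(e)}$ and $A:B\to P$ with components $\alpha_v\circ\langle\pi_e\rangle_{t(e)=v}$, the clearing operator is $\Phi=A\circ D$; $\Phi_*(\mathbf{x})=\Phi\circ\mathbf{x}$ on $\mathrm{Hom}(1,P)$ and $\mathrm{Fix}(\Phi_* )$ is its fixed-point set. The liability hypergraph $\mathcal{H}_G$ has vertices $V\sqcup\{e^*:e\in E\}$ and hyperedges $h_v^\delta$ (source $\{v\}$, target $\{e^*:s(e)=v\}$) and $h_v^\alpha$ (empty source, target $\{e^*:t(e)=v\}\cup\{v\}$); the incidence category $\mathcal{I}(\mathcal{H}_G)$ has one non-identity arrow $h\to w$ per incidence and no composites. The liability sheaf has stalks $X_v$ at $v,h_v^\delta$, $X_{s(e)}^{\lambda_e}$ at $e^*$, $\prod_{t(e)=v}X_{s(e)}^{\lambda_e}$ at $h_v^\alpha$, restrictions $\mathrm{id},\delta_e,\pi_e,\alpha_v$. $\Gamma(\mathcal{H}_G;\mathcal{L})=\mathrm{Hom}(1,\lim_{\mathcal{I}(\mathcal{H}_G)}\mathcal{L})$; its elements are the clearing sections. *)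

From mathcomp Require Import all_boot.
Set Implicit Arguments. Unset Strict Implicit. Unset Printing Implicit Defensive.

Record Category := {
  Ob :> Type;
  Hom : Ob -> Ob -> Type;
  idm : forall A, Hom A A;
  mcomp : forall A B C, Hom B C -> Hom A B -> Hom A C;
  compA : forall A B C D (h : Hom C D) (g : Hom B C) (f : Hom A B),
      mcomp h (mcomp g f) = mcomp (mcomp h g) f;
  comp1m : forall A B (f : Hom A B), mcomp (idm B) f = f;
  compm1 : forall A B (f : Hom A B), mcomp f (idm A) = f }.
Arguments Hom {_}.
Arguments idm {_}.
Arguments mcomp {_ _ _ _} _ _.

Definition mono (C : Category) (A B : C) (m : Hom A B) :=
  forall (Z : C) (f g : Hom Z A), mcomp m f = mcomp m g -> f = g.

Definition is_pullback (C : Category) (P Q P' Q' : C)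
    (m : Hom Q P) (f : Hom P' P) (m' : Hom Q' P') (f' : Hom Q' Q) :=
  mcomp m f' = mcomp f m' /\
  forall (Z : C) (a : Hom Z Q) (b : Hom Z P'), mcomp m a = mcomp f b ->
    exists! u : Hom Z Q', mcomp f' u = a /\ mcomp m' u = b.

(* Liability categories.  Finite products are products of arbitrary
   finite families (indexed by a finType); binary products are the
   products of families indexed by bool. *)
Unset Implicit Arguments.
Record LiabilityCat := {
  lcat :> Category;
  term : lcat;
  bang : forall A : lcat, Hom A term;
  bang_uniq : forall (A : lcat) (f : Hom A term), f = bang A;
  iprod : forall I : finType, (I -> lcat) -> lcat;
  iproj : forall (I : finType) (F : I -> lcat) (i : I), Hom (iprod I F) (F i);
  ituple : forall (I : finType) (F : I -> lcat) (Y : lcat),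
      (forall i : I, Hom Y (F i)) -> Hom Y (iprod I F);
  iproj_tuple : forall (I : finType) (F : I -> lcat) (Y : lcat)
      (f : forall i : I, Hom Y (F i)) (i : I),
      mcomp (iproj I F i) (ituple I F Y f) = f i;
  ituple_uniq : forall (I : finType) (F : I -> lcat) (Y : lcat)
      (f : forall i : I, Hom Y (F i)) (u : Hom Y (iprod I F)),
      (forall i, mcomp (iproj I F i) u = f i) -> u = ituple I F Y f;
  eqz : forall A B : lcat, Hom A B -> Hom A B -> lcat;
  eqm : forall (A B : lcat) (f g : Hom A B), Hom (eqz A B f g) A;
  eqm_eq : forall (A B : lcat) (f g : Hom A B),
      mcomp f (eqm A B f g) = mcomp g (eqm A B f g);
  eqz_univ : forall (A B : lcat) (f g : Hom A B) (Z : lcat) (h : Hom Z A),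
      mcomp f h = mcomp g h -> exists! u : Hom Z (eqz A B f g), mcomp (eqm A B f g) u = h;
  gle : forall P : lcat, Hom term P -> Hom term P -> Prop;
  gle_refl : forall (P : lcat) (x : Hom term P), gle P x x;
  gle_trans : forall (P : lcat) (x y z : Hom term P), gle P x y -> gle P y z -> gle P x z;
  gle_anti : forall (P : lcat) (x y : Hom term P), gle P x y -> gle P y x -> x = y;
  gle_post : forall (P Q : lcat) (f : Hom P Q) (x y : Hom term P),
      gle P x y -> gle Q (mcomp f x) (mcomp f y);
  constr : forall P Q : lcat, Hom Q P -> Prop;
  constr_mono : forall (P Q : lcat) (m : Hom Q P), constr P Q m -> mono m;
  constr_pb : forall (P Q : lcat) (m : Hom Q P), constr P Q m ->
      forall (P' : lcat) (f : Hom P' P), exists (Q' : lcat) (m' : Hom Q' P') (f' : Hom Q' Q),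
        is_pullback m f m' f' /\ constr P' Q' m';
  beta : forall P : lcat, Hom term P -> {Q : lcat & {m : Hom Q P | constr P Q m}};
  iprod_order : forall (I : finType) (F : I -> lcat) (x y : Hom term (iprod I F)),
      gle (iprod I F) x y <-> forall i, gle (F i) (mcomp (iproj I F i) x) (mcomp (iproj I F i) y) }.

Set Implicit Arguments.
Arguments term {_}.
Arguments bang {_}.
Arguments iprod {_ _}.
Arguments iproj {_ _ _}.
Arguments ituple {_ _ _ _}.
Arguments beta {_ _}.

Definition bprod (L : LiabilityCat) (X Y : L) : L :=
  iprod (fun b : bool => if b then X else Y).

Definition bpair (L : LiabilityCat) (Z X Y : L) (f : Hom Z X) (g : Hom Z Y)
  : Hom Z (bprod X Y) :=
  ituple (fun b : bool => if b as b' return Hom Z (if b' then X else Y) then f else g).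

Record Network (L : LiabilityCat) (V E : finType) (s t : E -> V) := {
  Xv : V -> L;
  lam : forall e : E, Hom term (Xv (s e));
  iota : forall v : V, Hom term (Xv v);
  delta : forall e : E, Hom (Xv (s e)) (projT1 (beta (lam e)));
  alphahat : forall v : V,
      Hom (bprod (Xv v)
                 (iprod (fun e : {e : E | t e == v} => projT1 (beta (lam (val e))))))
          (Xv v) }.

Section NetworkDefs.
Context (L : LiabilityCat) (V E : finType) (s t : E -> V) (N : Network L s t).

Definition Xl (e : E) : L := projT1 (beta (lam N e)).
Definition Bin (v : V) : L := iprod (fun e : {e : E | t e == v} => Xl (val e)).

Definition alpha (v : V) : Hom (Bin v) (Xv N v) :=
  mcomp (alphahat N v) (bpair (mcomp (iota N v) (bang (Bin v))) (idm (Bin v))).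

Definition PP : L := iprod (Xv N).
Definition BB : L := iprod Xl.

Definition Dmap : Hom PP BB :=
  ituple (fun e : E => mcomp (delta N e) (iproj (F := Xv N) (s e))).

Definition Amap : Hom BB PP :=
  ituple (fun v : V => mcomp (alpha v)
     (ituple (fun e : {e : E | t e == v} => iproj (F := Xl) (val e)))).

Definition Phi : Hom PP PP := mcomp Amap Dmap.
Definition Phistar (x : Hom term PP) : Hom term PP := mcomp Phi x.

End NetworkDefs.

Inductive IObj (V E : Type) :=
  | IVtx of V
  | IEstar of E      (* vertex e^* *)
  | IHdelta of V     (* hyperedge h_v^delta *)
  | IHalpha of V.    (* hyperedge h_v^alpha *)

Inductive IArr (V E : Type) :=
  | ADv of V
  | ADe of E
  | AAe of E
  | AAv of V.

Section Incidence.
Context (V E : Type) (s t : E -> V).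

Definition isrc (a : IArr V E) : IObj V E :=
  match a with
  | ADv v => IHdelta E v
  | ADe e => IHdelta E (s e)
  | AAe e => IHalpha E (t e)
  | AAv v => IHalpha E v
  end.

Definition itgt (a : IArr V E) : IObj V E :=
  match a with
  | ADv v => IVtx E v
  | ADe e => IEstar V e
  | AAe e => IEstar V e
  | AAv v => IVtx E v
  end.
End Incidence.

Section Sheaf.
Context (L : LiabilityCat) (V E : finType) (s t : E -> V) (N : Network L s t).

Definition stalk (o : IObj V E) : L :=
  match o with
  | IVtx v => Xv N v
  | IEstar e => Xl N e
  | IHdelta v => Xv N v
  | IHalpha v => Bin N v
  end.

Definition restr (a : IArr V E) : Hom (stalk (isrc s t a)) (stalk (itgt a)) :=
  match a as a0 return Hom (stalk (isrc s t a0)) (stalk (itgt a0)) with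
  | ADv v => idm (Xv N v)
  | ADe e => delta N e
  | AAe e => iproj (F := fun e' : {e' : E | t e' == t e} => Xl N (val e'))
                   (exist (fun e' => t e' == t e) e (eqxx (t e)))
  | AAv v => alpha N v
  end.
End Sheaf.

(* Limit cone of a diagram over a category whose only arrows are the
   identities and the given arrows (no composites). *)
Definition is_limit (C : Category) (O A : Type) (src tgt : A -> O)
    (F : O -> C) (Fm : forall a, Hom (F (src a)) (F (tgt a)))
    (Lim : C) (proj : forall o, Hom Lim (F o)) : Prop :=
  (forall a, mcomp (Fm a) (proj (src a)) = proj (tgt a)) /\
  (forall (Y : C) (c : forall o, Hom Y (F o)),
      (forall a, mcomp (Fm a) (c (src a)) = c (tgt a)) ->
      exists! u : Hom Y Lim, forall o, mcomp (proj o) u = c o).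

Definition dpath (V : eqType) (E : Type) (s t : E -> V) (p : seq E) : bool :=
  sorted (fun e e' => t e == s e') p.

Definition acyclic (V : eqType) (E : Type) (s t : E -> V) : Prop :=
  forall (e : E) (p : seq E), dpath s t (e :: p) -> t (last e p) != s e.

Definition max_path_length (V : eqType) (E : Type) (s t : E -> V) (r : nat) : Prop :=
  (exists p : seq E, dpath s t p /\ size p = r) /\
  (forall p : seq E, dpath s t p -> size p <= r).

Arguments Phistar {L V E s t} N x.
Arguments Phi {L V E s t} N.
Arguments restr {L V E s t} N a.
Arguments stalk {L V E s t} N o.
Arguments is_limit {C O A} src tgt F Fm Lim proj.

From Pilot Require Import Defs.
From mathcomp Require Import all_boot.

Set Implicit Arguments.
Unset Strict Implicit.
Unset Printing Implicit Defensive.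

(** The component of Phi(x) at a vertex v depends on x only through its
    components at the sources of the edges into v.  By induction on k, the
    v-component of Phi^(k+1)(x) is therefore independent of x as soon as every
    directed path ending at v has at most k edges; for k = r this makes
    Phi^(r+1) constant, and its value is the unique fixed point of Phi.
    A clearing section is determined by its vertex components (the cone
    conditions at h^delta and e^* force the others), and the condition at
    h^alpha_v says exactly that these components form a fixed point of Phi;
    conversely every fixed point extends to a cone.  So clearing sections are
    the fixed points of Phi, and there is exactly one. *)

Local Notation mcompA := Defs.compA.

Lemma iprod_hom_ext (L : LiabilityCat) (I : finType) (F : I -> L) (Y : L)
    (x y : Hom Y (iprod F)) :
  (forall i, mcomp (iproj i) x = mcomp (iproj i) y) -> x = y.
Proof.
move=> eq_xy; rewrite (ituple_uniq _ _ _ _ _ _ eq_xy); symmetry; exact: ituple_uniq.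
Qed.

Lemma ituple_comp (L : LiabilityCat) (I : finType) (F : I -> L) (Y Z : L)
    (f : forall i, Hom Y (F i)) (g : Hom Z Y) :
  mcomp (ituple f) g = ituple (fun i => mcomp (f i) g).
Proof. by apply: iprod_hom_ext => i; rewrite mcompA !iproj_tuple. Qed.

Lemma limit_hom_ext (C : Category) (O A : Type) (src tgt : A -> O)
    (F : O -> C) (Fm : forall a, Hom (F (src a)) (F (tgt a)))
    (Lim : C) (proj : forall o, Hom Lim (F o)) :
  is_limit src tgt F Fm Lim proj ->
  forall (Y : C) (u1 u2 : Hom Y Lim),
  (forall o, mcomp (proj o) u1 = mcomp (proj o) u2) -> u1 = u2.
Proof.
move=> [cone univ] Y u1 u2 eq_u.
have cone_u1 a : mcomp (Fm a) (mcomp (proj (src a)) u1) = mcomp (proj (tgt a)) u1.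
  by rewrite mcompA cone.
have [u [_ uniq_u]] := univ Y (fun o => mcomp (proj o) u1) cone_u1.
by rewrite -(uniq_u u1) //; apply: uniq_u => o; rewrite eq_u.
Qed.

Section ClearingOperator.
Variables (L : LiabilityCat) (V E : finType) (s t : E -> V) (N : Network L s t).

Definition inflow (Y : L) (x : Hom Y (PP N)) (v : V) : Hom Y (Bin N v) :=
  ituple (F := fun e : {e | t e == v} => Xl N (val e))
    (fun e => mcomp (delta N (val e)) (mcomp (iproj (s (val e))) x)).

Lemma inflow_comp (Y Z : L) (x : Hom Y (PP N)) (g : Hom Z Y) v :
  mcomp (inflow x v) g = inflow (mcomp x g) v.
Proof.
by apply: iprod_hom_ext => e; rewrite mcompA !iproj_tuple -!mcompA.
Qed.

Lemma iproj_Phi (Y : L) (x : Hom Y (PP N)) v :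
  mcomp (iproj v) (mcomp (Phi N) x) = mcomp (alpha N v) (inflow x v).
Proof.
rewrite /Phi !mcompA /Amap iproj_tuple -!(mcompA (alpha N v)) !ituple_comp.
congr (mcomp _ _); apply: iprod_hom_ext => e.
by rewrite !iproj_tuple mcompA.
Qed.

Lemma iproj_Phi_local (Y : L) (x y : Hom Y (PP N)) v :
  (forall e, t e = v -> mcomp (iproj (s e)) x = mcomp (iproj (s e)) y) ->
  mcomp (iproj v) (mcomp (Phi N) x) = mcomp (iproj v) (mcomp (Phi N) y).
Proof.
move=> eq_sources; rewrite !iproj_Phi; congr (mcomp _ _).
apply: iprod_hom_ext => -[e te_v].
by rewrite !iproj_tuple /= eq_sources // (eqP te_v).
Qed.

Lemma iproj_iter_Phi_indep k v :
  (forall e p, dpath s t (e :: p) -> t (last e p) = v -> size (e :: p) <= k) ->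
  forall (Y : L) (x y : Hom Y (PP N)),
  mcomp (iproj v) (iter k.+1 (mcomp (Phi N)) x) =
  mcomp (iproj v) (iter k.+1 (mcomp (Phi N)) y).
Proof.
elim: k v => [|k IHk] v paths_to_v Y x y; apply: iproj_Phi_local => e te_v.
  by have := paths_to_v e [::] erefl te_v.
apply: IHk => e' p path_e'p last_p.
have := paths_to_v e' (rcons p e).
move: path_e'p; rewrite /dpath /= rcons_path => ->.
by rewrite last_rcons last_p te_v eqxx size_rcons; apply.
Qed.

Lemma iter_Phi_const r : (forall p, dpath s t p -> size p <= r) ->
  forall (Y : L) (x y : Hom Y (PP N)),
  iter r.+1 (mcomp (Phi N)) x = iter r.+1 (mcomp (Phi N)) y.
Proof.
move=> paths_le_r Y x y; apply: iprod_hom_ext => v.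
by apply: iproj_iter_Phi_indep => e p path_ep _; apply: paths_le_r.
Qed.

Section ClearingSections.
Variables (Lim : L) (proj : forall o : IObj V E, Hom Lim (stalk N o)).
Hypothesis lim : is_limit (isrc s t) (@itgt V E) (stalk N) (restr N) Lim proj.

Let cone a : mcomp (restr N a) (proj (isrc s t a)) = proj (itgt a) := proj1 lim a.

Definition vertex_proj : Hom Lim (PP N) := ituple (fun v => proj (IVtx E v)).

Lemma proj_Hdelta v : proj (IHdelta E v) = proj (IVtx E v).
Proof. by rewrite -(cone (ADv E v)) comp1m. Qed.

Lemma proj_Estar e : proj (IEstar V e) = mcomp (delta N e) (proj (IVtx E (s e))).
Proof. by rewrite -proj_Hdelta -(cone (ADe V e)). Qed.

Lemma proj_Halpha v : proj (IHalpha E v) = inflow vertex_proj v.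
Proof.
apply: iprod_hom_ext => -[e te_v].
rewrite iproj_tuple /= /vertex_proj iproj_tuple -proj_Estar.
have te_eq_v := eqP te_v; subst v; rewrite (eq_irrelevance te_v (eqxx _)).
exact: (cone (AAe V e)).
Qed.

Lemma Phi_vertex_proj (Y : L) (u : Hom Y Lim) :
  mcomp (Phi N) (mcomp vertex_proj u) = mcomp vertex_proj u.
Proof.
apply: iprod_hom_ext => v; rewrite iproj_Phi -inflow_comp -proj_Halpha.
by rewrite mcompA (cone (AAv E v)) mcompA iproj_tuple.
Qed.

Lemma vertex_proj_mono : mono vertex_proj.
Proof.
move=> Y u1 u2 eq_u.
have eq_v v : mcomp (proj (IVtx E v)) u1 = mcomp (proj (IVtx E v)) u2.
  by rewrite -(iproj_tuple _ _ _ _ (fun v => proj (IVtx E v)) v) -!mcompA eq_u.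
apply: (limit_hom_ext lim) => -[v|e|v|v].
- exact: eq_v.
- by rewrite proj_Estar -!mcompA eq_v.
- by rewrite proj_Hdelta eq_v.
- by rewrite proj_Halpha !inflow_comp eq_u.
Qed.

Lemma fixpoint_section (Y : L) (x : Hom Y (PP N)) :
  mcomp (Phi N) x = x -> exists u : Hom Y Lim, mcomp vertex_proj u = x.
Proof.
move=> fix_x.
pose c o : Hom Y (stalk N o) :=
  match o with
  | IVtx v | IHdelta v => mcomp (iproj v) x
  | IEstar e => mcomp (delta N e) (mcomp (iproj (s e)) x)
  | IHalpha v => inflow x v
  end.
have cone_c a : mcomp (restr N a) (c (isrc s t a)) = c (itgt a).
  case: a => [v|e|e|v] /=.
  - exact: comp1m.
  - by [].
  - exact (iproj_tuple _ _ _ _ _ (exist _ e (eqxx (t e)))).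
  - by rewrite -iproj_Phi fix_x.
have [u [proj_u _]] := proj2 lim Y c cone_c.
exists u; apply: iprod_hom_ext => v.
by rewrite mcompA iproj_tuple (proj_u (IVtx E v)).
Qed.

End ClearingSections.
End ClearingOperator.

Theorem mainTheorem8 (L : LiabilityCat) (V E : finType) (s t : E -> V)
    (N : Network L s t) (r : nat) :
  acyclic s t -> max_path_length s t r ->
  exists xstar : Hom term (PP N),
    (forall x : Hom term (PP N), iter r.+1 (Phistar N) x = xstar) /\
    Phistar N xstar = xstar /\
    (forall (Lim : L) (proj : forall o : IObj V E, Hom Lim (stalk N o)),
       is_limit (isrc s t) (@itgt V E) (stalk N) (restr N) Lim proj ->
       (exists sigma : Hom term Lim,
          forall v : V, mcomp (proj (IVtx E v)) sigma = mcomp (iproj v) xstar) /\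
       (forall sigma1 sigma2 : Hom term Lim, sigma1 = sigma2)).
Proof.
(* Acyclicity is implied by the bound r on the lengths of directed paths. *)
move=> _ [_ paths_le_r].
have iter_const : forall x y : Hom term (PP N),
    iter r.+1 (Phistar N) x = iter r.+1 (Phistar N) y.
  exact: iter_Phi_const paths_le_r term.
set xstar := iter r.+1 (Phistar N) (ituple (Defs.iota N)).
have fix_xstar : Phistar N xstar = xstar by rewrite /xstar -iterS iterSr; apply: iter_const.
have fix_uniq x : Phistar N x = x -> x = xstar.
  by move=> fix_x; rewrite -(iter_fix r.+1 fix_x); apply: iter_const.
exists xstar; split=> [x|]; first exact: iter_const.
split=> // Lim proj lim; split.
- have [sigma <-] := fixpoint_section lim fix_xstar.
  by exists sigma => v; rewrite mcompA iproj_tuple.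
- move=> sigma1 sigma2; apply: (vertex_proj_mono lim).
  rewrite (fix_uniq _ (Phi_vertex_proj lim sigma1)).
  by rewrite (fix_uniq _ (Phi_vertex_proj lim sigma2)).
Qed.
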